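(* Let $X$ be a minimal shift space over $\mathcal{A}$ such that the extension graph $\mathcal{E}_X(\varepsilon)$ of the empty word is connected. Then $X$ has a bispecial letter, i.e., a letter $a\in\mathcal{A}$ that is both left special and right special.
   Context: A shift space over a finite alphabet $\mathcal{A}$ ($|\mathcal{A}|\ge2$) is a nonempty closed shift-invariant $X\subseteq\mathcal{A}^{\mathbb{Z}}$ whose language $\mathcal{L}(X)$ contains every letter; it is minimal if it has no nonempty proper closed shift-invariant subset. For $w\in\mathcal{L}(X)$, $E^L_X(w)=\{a:aw\in\mathcal{L}(X)\}$, $E^R_X(w)=\{b:wb\in\mathcal{L}(X)\}$; $w$ is left special if $|E^L_X(w)|\ge2$, right special if $|E^R_X(w)|\ge2$. $\mathcal{E}_X(w)$ is the bipartite graph on the disjoint union of $\{a^L:a\in E^L_X(w)\}$ and $\{b^R:b\in E^R_X(w)\}$ with an edge $\{a^L,b^R\}$ whenever $awb\in\mathcal{L}(X)$. *)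

From Stdlib Require Import ZArith Relation_Operators.
From mathcomp Require Import all_boot.

Set Implicit Arguments.
Unset Strict Implicit.
Unset Printing Implicit Defensive.

Section Shifts.
Variable A : finType.

Definition config := Z -> A.

Definition shift (x : config) : config := fun i => x (i + 1)%Z.

(* closed in the product topology: any x all of whose central windows
   x_[-n,n] are matched by some point of X (i.e. x in the closure of X,
   cylinders forming a neighbourhood basis) lies in X *)
Definition closed_set (X : config -> Prop) : Prop :=
  forall x : config,
    (forall n : nat, exists y, X y /\
        forall i : Z, (- Z.of_nat n <= i <= Z.of_nat n)%Z -> y i = x i) ->
    X x.

Definition shift_invariant (X : config -> Prop) : Prop :=
  forall x, X x <-> X (shift x).

Definition nonempty (X : config -> Prop) : Prop := exists x, X x.

Definition occurs_at (w : seq A) (x : config) (i : Z) : Prop :=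
  forall k : nat, (k < size w)%N -> x (i + Z.of_nat k)%Z = nth (x i) w k.

Definition lang (X : config -> Prop) (w : seq A) : Prop :=
  exists x, X x /\ exists i : Z, occurs_at w x i.

Definition shift_space (X : config -> Prop) : Prop :=
  nonempty X /\ closed_set X /\ shift_invariant X /\
  forall a : A, lang X [:: a].

Definition minimal_shift (X : config -> Prop) : Prop :=
  shift_space X /\
  forall Y : config -> Prop,
    nonempty Y -> closed_set Y -> shift_invariant Y ->
    (forall x, Y x -> X x) -> forall x, X x -> Y x.

Definition ext_left (X : config -> Prop) (w : seq A) (a : A) : Prop :=
  lang X (a :: w).
Definition ext_right (X : config -> Prop) (w : seq A) (b : A) : Prop :=
  lang X (rcons w b).

Definition left_special (X : config -> Prop) (w : seq A) : Prop :=
  exists a a', a <> a' /\ ext_left X w a /\ ext_left X w a'.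
Definition right_special (X : config -> Prop) (w : seq A) : Prop :=
  exists b b', b <> b' /\ ext_right X w b /\ ext_right X w b'.

(* extension graph E_X(w): vertices inl a = a^L (a in E^L(w)),
   inr b = b^R (b in E^R(w)); undirected edge {a^L, b^R} iff awb in L(X) *)
Definition ext_vertex (X : config -> Prop) (w : seq A) (v : A + A) : Prop :=
  match v with
  | inl a => ext_left X w a
  | inr b => ext_right X w b
  end.

Definition ext_edge (X : config -> Prop) (w : seq A) (u v : A + A) : Prop :=
  match u, v with
  | inl a, inr b => lang X (a :: rcons w b)
  | inr b, inl a => lang X (a :: rcons w b)
  | _, _ => False
  end.

Definition ext_graph_connected (X : config -> Prop) (w : seq A) : Prop :=
  (exists v, ext_vertex X w v) /\
  forall u v, ext_vertex X w u -> ext_vertex X w v ->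
    clos_refl_trans (A + A) (ext_edge X w) u v.

End Shifts.

(** Suppose no letter is bispecial.  If no right extension of a letter [a]
    were left special, [a^L] and its neighbours would form a connected
    component of [E(ε)] with a single left vertex, impossible with two letters;
    hence every letter has a left special successor, and dually a right special
    predecessor.  A left special letter is not right special, so its unique
    successor is that left special successor: left special letters are closed
    under successors, and along them successors are determined.  A forward
    orbit through left special letters is therefore eventually periodic; its
    periodic part is a point of [X] all of whose letters are left special, so
    by minimality every letter is left special, and a right special predecessor
    of any letter is bispecial. *)

From Pilot Require Import Defs.
From Stdlib Require Import ZArith Relation_Operators Lia Classical FunctionalExtensionality.
From mathcomp Require Import all_boot zify.

Set Implicit Arguments.
Unset Strict Implicit.
Unset Printing Implicit Defensive.

Lemma clos_rt_invariant {T : Type} {R : T -> T -> Prop} {S : T -> Prop} :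
  (forall u v, S u -> R u v -> S v) ->
  forall u v, clos_refl_trans T R u v -> S u -> S v.
Proof. by move=> RS u v; elim=> [x y /[swap]/RS|//|x y z _ IH1 _ IH2 /IH1/IH2]; apply. Qed.

Section ShiftSpaces.
Variables (A : finType) (X : config A -> Prop).
Implicit Types (x : config A) (a b : A).

Lemma shift_invariant_translate x k :
  shift_invariant X -> X x -> X (fun i => x (i + k)%Z).
Proof.
move=> Xinv Xx; induction k as [|m IH|m IH] using Z.peano_ind.
- suff -> : (fun i => x (i + 0)%Z) = x by [].
  by apply: functional_extensionality => i; rewrite Z.add_0_r.
- have -> : (fun i => x (i + Z.succ m)%Z) = Defs.shift (fun i => x (i + m)%Z).
    by apply: functional_extensionality => i; rewrite /Defs.shift; f_equal; lia.
  exact: (Xinv _).1.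
- apply: (Xinv _).2.
  suff -> : Defs.shift (fun i => x (i + Z.pred m)%Z) = (fun i => x (i + m)%Z) by [].
  by apply: functional_extensionality => i; rewrite /Defs.shift; f_equal; lia.
Qed.

Lemma lang_factor2 x i : X x -> lang X [:: x i; x (i + 1)%Z].
Proof. by move=> Xx; exists x; split=> //; exists i => -[|[|k]] //= _; rewrite Z.add_0_r. Qed.

Lemma lang_letter_at0 a :
  shift_invariant X -> lang X [:: a] -> exists x, X x /\ x 0%Z = a.
Proof.
move=> Xinv [x [Xx [i occ]]]; exists (fun j => x (j + i)%Z); split.
  exact: shift_invariant_translate _ _ Xinv Xx.
by have := occ 0%N erefl; rewrite /= Z.add_0_r.
Qed.

Lemma forward_eventually_periodic x :
  (forall i j, (0 <= i)%Z -> (0 <= j)%Z -> x i = x j -> x (i + 1)%Z = x (j + 1)%Z) ->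
  exists p q, (0 <= p)%Z /\ (0 < q)%Z /\
    forall m, (0 <= m)%Z -> x (p + m + q)%Z = x (p + m)%Z.
Proof.
move=> det.
have [i [j [lt_ij eq_ij]]] : exists i j : nat, (i < j)%N /\ x (Z.of_nat i) = x (Z.of_nat j).
  pose f (k : 'I_#|A|.+1) := x (Z.of_nat k).
  have /injectivePn [k [l ne_kl eq_kl]] : ~~ injectiveb f.
    by apply/injectiveP => /leq_card; rewrite card_ord ltnn.
  case: (ltngtP k l) => [lt|gt|/val_inj eq]; last by rewrite eq eqxx in ne_kl.
  - by exists k, l.
  - by exists l, k.
exists (Z.of_nat i), (Z.of_nat j - Z.of_nat i)%Z; split; [lia | split; [lia |]].
apply: natlike_ind => [|m m_ge0 IH].
  by rewrite Z.add_0_r eq_ij; f_equal; lia.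
rewrite -Z.add_1_r Z.add_assoc Z.add_shuffle0.
by apply: det IH; lia.
Qed.

Lemma eventually_periodic_mod x p q :
  (0 < q)%Z -> (forall m, (0 <= m)%Z -> x (p + m + q)%Z = x (p + m)%Z) ->
  forall k, (0 <= k)%Z -> x (p + k)%Z = x (p + k mod q)%Z.
Proof.
move=> q_gt0 per.
have per_mul : forall n, (0 <= n)%Z -> forall r, (0 <= r)%Z -> x (p + r + n * q)%Z = x (p + r)%Z.
  apply: natlike_ind => [r _|n n_ge0 IH r r_ge0]; first by rewrite Z.mul_0_l Z.add_0_r.
  have -> : (p + r + Z.succ n * q = p + (r + n * q) + q)%Z by nia.
  rewrite per; last by nia.
  by rewrite Z.add_assoc IH.
move=> k k_ge0.
have [mod_ge0 _] := Z.mod_pos_bound k q q_gt0.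
have div_ge0 : (0 <= k / q)%Z by apply: Z.div_pos; lia.
rewrite -(per_mul _ div_ge0 _ mod_ge0); f_equal.
have := Z.div_mod k q; lia.
Qed.

Lemma periodic_point_mem x p q :
  closed_set X -> shift_invariant X -> X x -> (0 < q)%Z ->
  (forall k, (0 <= k)%Z -> x (p + k)%Z = x (p + k mod q)%Z) ->
  X (fun i => x (p + i mod q)%Z).
Proof.
move=> Xcl Xinv Xx q_gt0 per; apply: Xcl => n.
exists (fun i => x (i + (p + Z.of_nat n * q))%Z); split.
  exact: shift_invariant_translate _ _ Xinv Xx.
move=> t t_in; rewrite -(Z.mod_add t (Z.of_nat n) q); last by lia.
by rewrite -per; [f_equal; lia | nia].
Qed.

Lemma minimal_shift_letters (P : A -> Prop) :
  minimal_shift X -> (exists x, X x /\ forall i, P (x i)) -> forall a, P a.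
Proof.
move=> [[_ [Xcl [Xinv letters]]] Xmin] [x [Xx Px]] a.
pose Y z := X z /\ forall i, P (z i).
have Ycl : closed_set Y.
  move=> z win; split.
    by apply: Xcl => n; have [w [[Xw _] eq_wz]] := win n; exists w.
  move=> t; have [w [[_ Pw] eq_wz]] := win (Z.abs_nat t).
  by rewrite -eq_wz; [exact: Pw | lia].
have Yinv : shift_invariant Y.
  move=> z; split=> -[Xz Pz]; split.
  - exact: (Xinv z).1.
  - by move=> t; apply: Pz.
  - exact: (Xinv z).2.
  - by move=> t; have := Pz (t - 1)%Z; rewrite /Defs.shift Z.sub_add.
have XY : forall z, X z -> Y z.
  by apply: Xmin Ycl Yinv _ => [|z []]; first exists x.
have [z [Xz [i occ]]] := letters a.
by have := occ 0%N erefl; rewrite /= Z.add_0_r => <-; apply: (XY z Xz).2.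
Qed.

Lemma not_right_special_successor a b b' :
  ~ right_special X [:: a] -> lang X [:: a; b] -> lang X [:: a; b'] -> b = b'.
Proof. by move=> nR ab ab'; case: (eqVneq b b') => // /eqP ne; case: nR; exists b, b'. Qed.

Lemma not_left_special_predecessor a a' b :
  ~ left_special X [:: b] -> lang X [:: a; b] -> lang X [:: a'; b] -> a = a'.
Proof. by move=> nL ab a'b; case: (eqVneq a a') => // /eqP ne; case: nL; exists a, a'. Qed.

Lemma minimal_successor_closed_letters (P : A -> Prop) :
  minimal_shift X -> (exists a, P a) ->
  (forall a b, P a -> lang X [:: a; b] -> P b) ->
  (forall a, P a -> ~ right_special X [:: a]) ->
  forall a, P a.
Proof.
move=> Xmin [a Pa] P_succ P_notR; have [[_ [Xcl [Xinv letters]]] _] := Xmin.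
have [x [Xx x0]] := lang_letter_at0 Xinv (letters a).
have Px : forall i, (0 <= i)%Z -> P (x i).
  apply: natlike_ind => [|i _ IH]; first by rewrite x0.
  by rewrite -Z.add_1_r; apply: P_succ IH (lang_factor2 i Xx).
have [i j i_ge0 j_ge0 eq_ij | p [q [p_ge0 [q_gt0 per]]]] := @forward_eventually_periodic x.
  apply: (not_right_special_successor (P_notR _ (Px i i_ge0))).
    exact: lang_factor2.
  by rewrite eq_ij; apply: lang_factor2.
apply: minimal_shift_letters Xmin _.
exists (fun i => x (p + i mod q)%Z); split.
  by apply: periodic_point_mem => //; apply: eventually_periodic_mod.
by move=> i; apply: Px; have := Z.mod_pos_bound i q q_gt0; lia.
Qed.

Section EmptyWordExtensionGraph.
Hypothesis letters : forall a : A, lang X [:: a].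
Hypothesis connected : ext_graph_connected X [::].

Lemma left_special_successor_exists a :
  (exists a', a' <> a) -> exists b, lang X [:: a; b] /\ left_special X [:: b].
Proof.
move=> [a' ne_a'a]; apply: NNPP => noL.
pose S u := u = inl a \/ exists b, u = inr b /\ lang X [:: a; b].
have S_closed : forall u v, S u -> ext_edge X [::] u v -> S v.
  move=> u [c|c] [->|[b [-> ab]]] /= edge; try by case: edge.
  - left; congr inl; apply: (not_left_special_predecessor _ edge ab) => Lb.
    by apply: noL; exists b.
  - by right; exists c.
have : S (inl a') := clos_rt_invariant S_closed
  (connected.2 (inl a) (inl a') (letters a) (letters a')) (or_introl erefl).
by case=> [[/ne_a'a] | [? []]].
Qed.

Lemma right_special_predecessor_exists b :
  (exists b', b' <> b) -> exists a, lang X [:: a; b] /\ right_special X [:: a].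
Proof.
move=> [b' ne_b'b]; apply: NNPP => noR.
pose S u := u = inr b \/ exists a, u = inl a /\ lang X [:: a; b].
have S_closed : forall u v, S u -> ext_edge X [::] u v -> S v.
  move=> u [c|c] [->|[a [-> ab]]] /= edge; try by case: edge.
  - by right; exists c.
  - left; congr inr; apply: (not_right_special_successor _ edge ab) => Ra.
    by apply: noR; exists a.
have : S (inr b') := clos_rt_invariant S_closed
  (connected.2 (inr b) (inr b') (letters b) (letters b')) (or_introl erefl).
by case=> [[/ne_b'b] | [? []]].
Qed.

End EmptyWordExtensionGraph.

End ShiftSpaces.

Theorem mainTheorem13 (A : finType) (X : config A -> Prop) :
  (2 <= #|A|)%N ->
  minimal_shift X ->
  ext_graph_connected X [::] ->
  exists a : A, left_special X [:: a] /\ right_special X [:: a].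
Proof.
move=> card_A Xmin connected; have letters := Xmin.1.2.2.2.
have /card_gt1P [c [c' [_ _ ne_cc']]] := card_A.
have other : forall a : A, exists a', a' <> a.
  move=> a; case: (eqVneq c a) => [<- | /eqP ne_ca]; last by exists c.
  by exists c'; apply/eqP; rewrite eq_sym.
apply: NNPP => no_bispecial.
have LS_notRS : forall a, left_special X [:: a] -> ~ right_special X [:: a].
  by move=> a La Ra; apply: no_bispecial; exists a.
have LS_succ : forall a b, left_special X [:: a] -> lang X [:: a; b] -> left_special X [:: b].
  move=> a b La ab.
  have [b' [ab' Lb']] := left_special_successor_exists letters connected (other a).
  by rewrite (not_right_special_successor (LS_notRS a La) ab ab').
have [b [_ Lb]] := left_special_successor_exists letters connected (other c).
have all_LS := minimal_successor_closed_letters Xmin (ex_intro _ b Lb) LS_succ LS_notRS.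
have [a [_ Ra]] := right_special_predecessor_exists letters connected (other c).
by apply: no_bispecial; exists a; split; [apply: all_LS |].
Qed.
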